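(* Let $K$ be a field, $\mathcal A$ a $K$-algebra, $\vartheta$ any one of the four types (left, right, pre-two-sided, two-sided), and $V$ a $K$-subspace of $\mathcal A$ such that every element of $\sqrt V$ is algebraic over $K$ and $I_{\vartheta,V}=0$. Then $V$ is a $\vartheta$-Mathieu subspace of $\mathcal A$ if and only if $V$ contains no nonzero idempotent. Consequently, if $\vartheta\neq$ pre-two-sided and $\mathcal A$ is an algebraic $K$-algebra with no non-trivial $\vartheta$-ideals, then a non-trivial $K$-subspace $M$ of $\mathcal A$ is a $\vartheta$-Mathieu subspace of $\mathcal A$ if and only if $M$ contains no nonzero idempotent of $\mathcal A$.
   Context: All algebras are associative and unital. $\sqrt S$ is the set of $a\in\mathcal A$ with $a^m\in S$ for all sufficiently large $m$. An idempotent is $e$ with $e^2=e$. A subspace is non-trivial if it is neither $0$ nor $\mathcal A$. $\mathcal A$ is algebraic if every element is algebraic over $K$. A $\vartheta$-ideal is a left ideal if $\vartheta$ = left, right ideal if $\vartheta$ = right, two-sided ideal if $\vartheta$ is pre-two-sided or two-sided. For $\vartheta\neq$ pre-two-sided, $I_{\vartheta,V}$ is the largest $\vartheta$-ideal of $\mathcal A$ contained in $V$ (the sum of all $\vartheta$-ideals contained in $V$); for $\vartheta$ = pre-two-sided, $I_{\vartheta,V}$ is the sum of the largest left ideal contained in $V$ and the largest right ideal contained in $V$. Mathieu subspaces: a $K$-subspace $V$ is a left (resp. right) Mathieu subspace if whenever $a^m\in V$ for all $m\ge1$, then for every $b\in\mathcal A$, $ba^m\in V$ (resp. $a^mb\in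 V$) for all sufficiently large $m$; pre-two-sided if both left and right; two-sided if whenever $a^m\in V$ for all $m\ge1$, for all $b,c$, $ba^mc\in V$ for all sufficiently large $m$. *)

From HB Require Import structures.
From mathcomp Require Import all_boot all_order all_algebra.
Set Implicit Arguments. Unset Strict Implicit. Unset Printing Implicit Defensive.
Import GRing.Theory.
Local Open Scope ring_scope.

Inductive theta := ThLeft | ThRight | ThPreTwo | ThTwo.

Section Defs.
Variables (K : fieldType) (A : algType K).

Definition is_subspace (V : A -> Prop) : Prop :=
  V 0 /\ forall (k : K) (u v : A), V u -> V v -> V (k *: u + v).

Definition is_left_ideal (I : A -> Prop) : Prop :=
  is_subspace I /\ forall b a, I a -> I (b * a).
Definition is_right_ideal (I : A -> Prop) : Prop :=
  is_subspace I /\ forall b a, I a -> I (a * b).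
Definition is_twosided_ideal (I : A -> Prop) : Prop :=
  is_left_ideal I /\ is_right_ideal I.

Definition is_theta_ideal (th : theta) (I : A -> Prop) : Prop :=
  match th with
  | ThLeft => is_left_ideal I
  | ThRight => is_right_ideal I
  | ThPreTwo | ThTwo => is_twosided_ideal I
  end.

(* the largest ideal of a given kind contained in V (= the sum of all such
   ideals contained in V; as these are closed under sums, it is their union) *)
Definition largest_ideal_in (P : (A -> Prop) -> Prop) (V : A -> Prop) : A -> Prop :=
  fun x => exists I, P I /\ (forall y, I y -> V y) /\ I x.

Definition I_theta (th : theta) (V : A -> Prop) : A -> Prop :=
  match th with
  | ThPreTwo => fun x => exists l r, x = l + r /\
        largest_ideal_in is_left_ideal V l /\ largest_ideal_in is_right_ideal V r
  | _ => largest_ideal_in (is_theta_ideal th) V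
  end.

Definition radical (V : A -> Prop) : A -> Prop :=
  fun a => exists N : nat, forall m : nat, (N <= m)%N -> V (a ^+ m).

Definition algebraic_over (a : A) : Prop :=
  exists p : {poly K}, p != 0 /\ (map_poly (in_alg A) p).[a] = 0.

Definition is_idempotent (e : A) : Prop := e * e = e.

Definition all_powers_in (V : A -> Prop) (a : A) : Prop :=
  forall m : nat, (1 <= m)%N -> V (a ^+ m).

Definition left_mathieu (V : A -> Prop) : Prop :=
  forall a, all_powers_in V a -> forall b, exists N : nat,
    forall m : nat, (N <= m)%N -> V (b * a ^+ m).
Definition right_mathieu (V : A -> Prop) : Prop :=
  forall a, all_powers_in V a -> forall b, exists N : nat,
    forall m : nat, (N <= m)%N -> V (a ^+ m * b).
Definition twosided_mathieu (V : A -> Prop) : Prop :=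
  forall a, all_powers_in V a -> forall b c, exists N : nat,
    forall m : nat, (N <= m)%N -> V (b * a ^+ m * c).

Definition is_mathieu (th : theta) (V : A -> Prop) : Prop :=
  is_subspace V /\
  match th with
  | ThLeft => left_mathieu V
  | ThRight => right_mathieu V
  | ThPreTwo => left_mathieu V /\ right_mathieu V
  | ThTwo => twosided_mathieu V
  end.

Definition no_nonzero_idempotent (V : A -> Prop) : Prop :=
  forall e, V e -> is_idempotent e -> e = 0.

Definition nontrivial_subspace (M : A -> Prop) : Prop :=
  is_subspace M /\ (exists x, M x /\ x <> 0) /\ (exists x, ~ M x).

End Defs.

From mathcomp Require Import all_boot all_order all_algebra.
From mathcomp Require Import ring.
Set Implicit Arguments. Unset Strict Implicit. Unset Printing Implicit Defensive.
Import GRing.Theory.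
Local Open Scope ring_scope.

(* If every power a^m (m >= 1) lies in V, a is algebraic and V holds no
   nonzero idempotent, then a is nilpotent: writing p(X) X = X^m q(X) with
   q(0) <> 0 for an annihilating polynomial p, a Bezout identity
   u q + v X^m = 1 makes e := (v X^m)(a) an idempotent lying in V, hence e = 0,
   and a^m = a^m e = 0.  Nilpotency of such a makes every Mathieu condition
   trivial.  Conversely, if V is a Mathieu subspace, an idempotent e in V
   satisfies e^m = e, so the Mathieu condition puts the whole ideal generated
   by e inside V, i.e. e lies in I_{theta,V} = 0. *)

Section Nilpotency.
Variables (K : fieldType) (A : algType K).

Lemma fitting_idempotent (a : A) : algebraic_over a ->
  exists (m : nat) (v : {poly K}), (0 < m)%N /\
    let e := horner_alg a (v * 'X^m) in e * e = e /\ a ^+ m = a ^+ m * e.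
Proof.
move=> [p [p_neq0 pa0]].
(* Multiplying by X forces a zero of positive order at 0, so that e below has
   no constant term. *)
have pXa0 : horner_alg a (p * 'X) = 0 by rewrite rmorphM /= [horner_alg a p]pa0 mul0r.
have pX_neq0 : p * 'X != 0 by rewrite mulf_neq0 ?polyX_eq0.
have [m [q q0_neq0 pX_eq]] := multiplicity_XsubC (p * 'X) 0.
rewrite pX_neq0 /= in q0_neq0; rewrite subr0 in pX_eq.
have m_gt0 : (0 < m)%N.
  case: m pX_eq => // pX_eq; move: q0_neq0.
  by rewrite expr0 mulr1 in pX_eq; rewrite -pX_eq /root hornerMX mulr0 eqxx.
have cop : coprimep q ('X ^+ m).
  by apply: coprimep_expr; rewrite -[X in coprimep _ X]subr0 coprimep_XsubC.
have [[u v] /= bezout] := Bezout_eq1_coprimepP _ _ cop.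
have t_idem : (v * 'X^m) * (v * 'X^m) = v * 'X^m - v * u * (p * 'X).
  by rewrite -[X in X - _]mulr1 -bezout pX_eq; ring.
have Xm_eq : 'X^m = u * (p * 'X) + 'X^m * (v * 'X^m).
  by rewrite -[LHS]mulr1 -bezout pX_eq; ring.
exists m, v; split=> //; split.
  by rewrite -rmorphM t_idem rmorphB (rmorphM _ (v * u)) /= pXa0 mulr0 subr0.
have -> : a ^+ m = horner_alg a 'X^m by rewrite rmorphXn /= horner_algX.
by rewrite -rmorphM {1}Xm_eq rmorphD (rmorphM _ u) /= pXa0 mulr0 add0r.
Qed.

Variable V : A -> Prop.
Hypothesis V_subspace : is_subspace V.

Lemma subspace_horner_mulXn (a : A) : all_powers_in V a ->
  forall (s : {poly K}) (j : nat), (0 < j)%N -> V (horner_alg a (s * 'X^j)).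
Proof.
case: V_subspace => V0 VD Va; elim/poly_ind => [|s c IH] j j_gt0.
  by rewrite mul0r rmorph0.
rewrite mulrDl rmorphD /= -mulrA -exprS [X in _ + X]rmorphM /= horner_algC.
by rewrite rmorphXn /= horner_algX mulr_algl addrC; apply: VD; [apply: Va | apply: IH].
Qed.

Lemma nilpotent_of_powers_in (a : A) : all_powers_in V a ->
  no_nonzero_idempotent V -> algebraic_over a -> exists k, a ^+ k = 0.
Proof.
move=> Va noidem /fitting_idempotent [m [v [m_gt0 [e_idem am_eq]]]].
have Ve : V (horner_alg a (v * 'X^m)) by apply: subspace_horner_mulXn.
by exists m; rewrite am_eq (noidem _ Ve e_idem) mulr0.
Qed.

Lemma twosided_mathieu_of_nilpotent :
  (forall a, all_powers_in V a -> exists k, a ^+ k = 0) -> twosided_mathieu V.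
Proof.
move=> nil a Va b c; have [k ak0] := nil a Va; exists k => m le_km.
by rewrite -(subnK le_km) exprD ak0 !mulr0 mul0r; case: V_subspace.
Qed.

Lemma is_mathieu_of_twosided th : twosided_mathieu V -> is_mathieu th V.
Proof.
move=> M2; have ML : left_mathieu V.
  by move=> a Va b; have [N HN] := M2 a Va b 1; exists N => m /HN; rewrite mulr1.
have MR : right_mathieu V.
  by move=> a Va b; have [N HN] := M2 a Va 1 b; exists N => m /HN; rewrite mul1r.
by split=> //; case: th.
Qed.

End Nilpotency.

Section IdempotentsInMathieu.
Variables (K : fieldType) (A : algType K) (V : A -> Prop).
Hypothesis V_subspace : is_subspace V.

Definition left_core : A -> Prop := fun x => forall b, V (b * x).
Definition right_core : A -> Prop := fun x => forall b, V (x * b).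
Definition twosided_core : A -> Prop := fun x => forall b c, V (b * x * c).

Lemma left_core_ideal : is_left_ideal left_core.
Proof.
case: V_subspace => V0 VD; split; [split|].
- by move=> b; rewrite mulr0.
- by move=> k u v Hu Hv b; rewrite mulrDr -scalerAr; apply: VD.
- by move=> b a Ha c; rewrite mulrA.
Qed.

Lemma right_core_ideal : is_right_ideal right_core.
Proof.
case: V_subspace => V0 VD; split; [split|].
- by move=> b; rewrite mul0r.
- by move=> k u v Hu Hv b; rewrite mulrDl -scalerAl; apply: VD.
- by move=> b a Ha c; rewrite -mulrA.
Qed.

Lemma twosided_core_ideal : is_twosided_ideal twosided_core.
Proof.
case: V_subspace => V0 VD.
have sub : is_subspace twosided_core.
  split; first by move=> b c; rewrite mulr0 mul0r.
  by move=> k u v Hu Hv b c; rewrite mulrDr mulrDl -scalerAr -scalerAl; apply: VD.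
split; split=> //.
- by move=> b a Ha c d; rewrite mulrA.
- by move=> b a Ha c d; rewrite -!mulrA mulrA.
Qed.

Lemma largest_ideal_in_zero (P : (A -> Prop) -> Prop) :
  P (fun x => x = 0) -> largest_ideal_in P V 0.
Proof.
by case: V_subspace => V0 _ P0; exists (fun x => x = 0); split=> //; split=> // y ->.
Qed.

Lemma zero_right_ideal : is_right_ideal (fun x : A => x = 0).
Proof.
split; [split|] => //; first by move=> k u v -> ->; rewrite scaler0 addr0.
by move=> b a ->; rewrite mul0r.
Qed.

Lemma idempotent_expr (e : A) m : is_idempotent e -> (0 < m)%N -> e ^+ m = e.
Proof. by move=> e_idem; case: m => // m _; elim: m => // m IH; rewrite exprS IH. Qed.

Section MathieuIdempotent.
Variable e : A.
Hypotheses (Ve : V e) (e_idem : is_idempotent e).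

Let e_powers : all_powers_in V e.
Proof. by move=> m /(idempotent_expr e_idem) ->. Qed.

Lemma left_mathieu_idempotent_in_largest :
  left_mathieu V -> largest_ideal_in (@is_left_ideal K A) V e.
Proof.
move=> ML; exists left_core; split; first exact: left_core_ideal.
split=> [y /(_ 1)|b]; first by rewrite mul1r.
by have [N /(_ N.+1 (leqnSn N))] := ML e e_powers b; rewrite idempotent_expr.
Qed.

Lemma right_mathieu_idempotent_in_largest :
  right_mathieu V -> largest_ideal_in (@is_right_ideal K A) V e.
Proof.
move=> MR; exists right_core; split; first exact: right_core_ideal.
split=> [y /(_ 1)|b]; first by rewrite mulr1.
by have [N /(_ N.+1 (leqnSn N))] := MR e e_powers b; rewrite idempotent_expr.
Qed.

Lemma twosided_mathieu_idempotent_in_largest :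
  twosided_mathieu V -> largest_ideal_in (@is_twosided_ideal K A) V e.
Proof.
move=> M2; exists twosided_core; split; first exact: twosided_core_ideal.
split=> [y /(_ 1 1)|b c]; first by rewrite mul1r mulr1.
by have [N /(_ N.+1 (leqnSn N))] := M2 e e_powers b c; rewrite idempotent_expr.
Qed.

Lemma idempotent_in_I_theta th : is_mathieu th V -> I_theta th V e.
Proof.
case=> _; case: th => [ML|MR|[ML _]|M2] /=.
- exact: left_mathieu_idempotent_in_largest.
- exact: right_mathieu_idempotent_in_largest.
- exists e, 0; rewrite addr0; split=> //; split.
    exact: left_mathieu_idempotent_in_largest.
  exact/largest_ideal_in_zero/zero_right_ideal.
- exact: twosided_mathieu_idempotent_in_largest.
Qed.

End MathieuIdempotent.

End IdempotentsInMathieu.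

Lemma mathieu_iff_no_nonzero_idempotent (K : fieldType) (A : algType K)
    (th : theta) (V : A -> Prop) :
  is_subspace V -> (forall a, radical V a -> algebraic_over a) ->
  (forall x, I_theta th V x -> x = 0) ->
  (is_mathieu th V <-> no_nonzero_idempotent V).
Proof.
move=> V_sub alg I0; split=> [MV e Ve e_idem|noidem].
  exact/I0/(idempotent_in_I_theta V_sub Ve e_idem).
apply/(is_mathieu_of_twosided V_sub)/(twosided_mathieu_of_nilpotent V_sub) => a Va.
by apply: (nilpotent_of_powers_in V_sub Va noidem); apply: alg; exists 1%N.
Qed.

Lemma I_theta_eq0_of_simple (K : fieldType) (A : algType K) th (M : A -> Prop) :
  th <> ThPreTwo ->
  (forall I : A -> Prop, is_theta_ideal th I ->
     (forall x, I x -> x = 0) \/ (forall x, I x)) ->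
  (exists x, ~ M x) -> forall x, I_theta th M x -> x = 0.
Proof.
move=> th_neq simple [y My].
have I0 x : largest_ideal_in (is_theta_ideal th) M x -> x = 0.
  move=> [I [thI [IM Ix]]]; case: (simple I thI) => [I_eq0|Iall]; first exact: I_eq0.
  by case: My; apply/IM/Iall.
by case: th th_neq simple I0.
Qed.

Theorem proposition4p5 (K : fieldType) (A : algType K) :
  (forall (th : theta) (V : A -> Prop),
     is_subspace V ->
     (forall a, radical V a -> algebraic_over a) ->
     (forall x, I_theta th V x -> x = 0) ->
     (is_mathieu th V <-> no_nonzero_idempotent V))
  /\
  (forall th : theta, th <> ThPreTwo ->
     (forall a : A, algebraic_over a) ->
     (forall I : A -> Prop, is_theta_ideal th I ->
        (forall x, I x -> x = 0) \/ (forall x, I x)) ->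
     forall M : A -> Prop, nontrivial_subspace M ->
       (is_mathieu th M <-> no_nonzero_idempotent M)).
Proof.
split=> [|th th_neq alg simple M [M_sub [_ M_proper]]].
  exact: mathieu_iff_no_nonzero_idempotent.
apply: mathieu_iff_no_nonzero_idempotent M_sub (fun a _ => alg a) _.
exact: I_theta_eq0_of_simple th_neq simple M_proper.
Qed.
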